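(* Let $K=K(p,q)$ be a 2-bridge knot with $e_i,\sigma,C,D,W,W_*$ as in the context, let $n\in\mathbb{Z}$ and $N=n-2\sigma$. Let $t\in\mathbb{C}\setminus\{0\}$ with $t\neq\pm1$ and $u\in\mathbb{C}$ with $(t-t^{-1})^2\neq u$, and write $W=\begin{pmatrix}a&b\\c&d\end{pmatrix}$. Then $C^NW_*W=\mathrm{Id}$ and $WC=DW$ hold if and only if $a=(t-t^{-1})b$ and $t^N\big((t-t^{-1})^2-u\big)b^2=1$.
   Context: $K(p,q)$ denotes the 2-bridge knot with $p,q$ odd integers, $q\in(-p,p)$. For $1\le i\le p-1$ let $e_i=(-1)^{\lfloor iq/p\rfloor}$ and $\sigma=\sum_{i=1}^{p-1}e_i$. For $t\in\mathbb{C}\setminus\{0\}$, $u\in\mathbb{C}$ let $C=\begin{pmatrix}t&1\\0&t^{-1}\end{pmatrix}$, $D=\begin{pmatrix}t&0\\-u&t^{-1}\end{pmatrix}$, $W=C^{e_1}D^{e_2}\cdots C^{e_{p-2}}D^{e_{p-1}}$ and $W_*=D^{e_1}C^{e_2}\cdots D^{e_{p-2}}C^{e_{p-1}}$. *)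

From mathcomp Require Import all_boot all_algebra complex.
From mathcomp Require Import reals.
Set Implicit Arguments. Unset Strict Implicit. Unset Printing Implicit Defensive.
Import GRing.Theory Num.Theory.
Local Open Scope ring_scope.

Section TwoBridge.
Variable R : realType.
Notation CC := (R[i]).

(* e_i = (-1)^{floor(i q / p)}; intdiv's %/ is floor division for p > 0 *)
Definition esign (p : nat) (q : int) (i : nat) : int :=
  (-1) ^+ `|((i%:Z * q) %/ p%:Z)%Z|%N.

Definition sigma (p : nat) (q : int) : int :=
  \sum_(1 <= i < p) esign p q i.

Definition Cmat (t : CC) : 'M[CC]_2 :=
  \matrix_(i < 2, j < 2)
    (if (i == 0) && (j == 0) then t
     else if (i == 0) && (j == 1) then 1
     else if (i == 1) && (j == 1) then t^-1 else 0).

Definition Dmat (t u : CC) : 'M[CC]_2 :=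
  \matrix_(i < 2, j < 2)
    (if (i == 0) && (j == 0) then t
     else if (i == 1) && (j == 0) then - u
     else if (i == 1) && (j == 1) then t^-1 else 0).

Definition Wmat (p : nat) (q : int) (t u : CC) : 'M[CC]_2 :=
  \prod_(1 <= i < p) (if odd i then Cmat t else Dmat t u) ^ esign p q i.

Definition Wstar (p : nat) (q : int) (t u : CC) : 'M[CC]_2 :=
  \prod_(1 <= i < p) (if odd i then Dmat t u else Cmat t) ^ esign p q i.
End TwoBridge.

(* Write s = t - t^-1 and z = s^2 - u.  The matrix P = [[s, 1], [-u, -s]]
   satisfies C P = P D, D P = P C and P^2 = z, hence W_* P = P W; the matrix
   S = diag(1, -u) satisfies C S = S D^T and D S = S C^T, and e_{p-i} = e_i
   makes W read backwards equal to W_* read forwards, hence W S = S W^T, i.e.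
   c = -u b.  With c = -u b, the relation W C = D W is just a = s b.  For
   Q = P W one has Q^2 = z W_* W, so the first relation reads C^N Q^2 = z.
   Once a = s b, Q is upper triangular with diagonal (z b, -1/b) and commutes
   with C.  As t <> t^-1, a matrix commuting with C is scalar as soon as its
   diagonal entries agree, and the diagonal entries t^N z^2 b^2 and
   t^-N b^-2 of C^N Q^2 both equal z exactly when t^N z b^2 = 1. *)

From mathcomp Require Import all_boot all_algebra complex.
From mathcomp Require Import reals.
From mathcomp Require Import ring zify.
Import GRing.Theory Num.Theory.
Set Implicit Arguments. Unset Strict Implicit. Unset Printing Implicit Defensive.
Local Open Scope ring_scope.

Section Intertwining.
Variable R : unitRingType.
Implicit Types A B P : R.

Lemma intertwineV A B P : A \is a GRing.unit -> B \is a GRing.unit ->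
  A * P = P * B -> A^-1 * P = P * B^-1.
Proof. by move=> uA uB AP; rewrite -{1}(mulrK uB P) -AP mulrA mulKr. Qed.

Lemma intertwine_exprz A B P (k : int) : A \is a GRing.unit -> B \is a GRing.unit ->
  A * P = P * B -> A ^ k * P = P * B ^ k.
Proof.
move=> uA uB AP.
have APn n : A ^+ n * P = P * B ^+ n.
  elim: n => [|n IHn]; first by rewrite !expr0 mul1r mulr1.
  by rewrite exprS -mulrA IHn mulrA AP -mulrA -exprS.
by case: k => n; [exact: APn | apply: intertwineV; rewrite ?unitrX].
Qed.

Lemma intertwine_prod (I : Type) (r : seq I) (F G : I -> R) P :
  (forall i, F i * P = P * G i) -> (\prod_(i <- r) F i) * P = P * \prod_(i <- r) G i.
Proof.
move=> FG; apply: (big_ind2 (fun X Y => X * P = P * Y)) => [|X1 Y1 X2 Y2 e1 e2|i _].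
- by rewrite mul1r mulr1.
- by rewrite -mulrA e2 mulrA e1 mulrA.
- exact: FG.
Qed.

End Intertwining.

Lemma eq_mx2 (T : Type) (A B : 'M[T]_2) :
  A 0 0 = B 0 0 -> A 0 1 = B 0 1 -> A 1 0 = B 1 0 -> A 1 1 = B 1 1 -> A = B.
Proof.
move=> e00 e01 e10 e11; apply/matrixP => i j.
have ord2 (k : 'I_2) : k = 0 \/ k = 1.
  by case: k => [[|[|//]] ?]; [left | right]; apply: val_inj.
by case: (ord2 i) => ->; case: (ord2 j) => ->.
Qed.

Section Matrix2.
Variable R : comUnitRingType.
Implicit Types A B : 'M[R]_2.

Lemma mulmx2E A B i j : (A * B) i j = A i 0 * B 0 j + A i 1 * B 1 j.
Proof.
rewrite -mulmxE mxE big_ord_recl big_ord1.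
by have -> : lift ord0 ord0 = 1 :> 'I_2 by apply: val_inj.
Qed.

Lemma det_mx2 A : \det A = A 0 0 * A 1 1 - A 0 1 * A 1 0.
Proof.
rewrite (expand_det_row A 0) big_ord_recl big_ord1 /cofactor !det_mx11 !mxE /=.
have -> : lift ord0 ord0 = 1 :> 'I_2 by apply: val_inj.
have -> : lift 1 0 = 0 :> 'I_2 by apply: val_inj.
by rewrite /bump /= expr0 expr1 !mul1r mulN1r mulrN.
Qed.

Lemma mulmx2_upper A B : A 1 0 = 0 -> B 1 0 = 0 ->
  [/\ (A * B) 0 0 = A 0 0 * B 0 0, (A * B) 1 0 = 0 & (A * B) 1 1 = A 1 1 * B 1 1].
Proof. by move=> A10 B10; rewrite !mulmx2E A10 B10 !mulr0 !mul0r !addr0 add0r. Qed.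

Lemma trmx_exprz n (A : 'M[R]_n.+1) (k : int) : (A ^ k)^T = A^T ^ k.
Proof.
have trX m : (A ^+ m)^T = A^T ^+ m.
  elim: m => [|m IHm]; first by rewrite !expr0 trmx1.
  by rewrite exprS exprSr -IHm -mulmxE trmx_mul.
case: k => m; first exact: trX.
by change (((A ^+ m.+1)^-1)^T = (A^T ^+ m.+1)^-1); rewrite -trX; exact: trmx_inv.
Qed.

Lemma trmx_prod (I : Type) n (r : seq I) (F : I -> 'M[R]_n.+1) :
  (\prod_(i <- r) F i)^T = \prod_(i <- rev r) (F i)^T.
Proof.
rewrite rev_big_rev; apply: (big_morph _ _ (trmx1 _ _)) => A B.
by rewrite -mulmxE trmx_mul.
Qed.

Lemma det_exprz n (A : 'M[R]_n.+1) (k : int) : \det (A ^ k) = \det A ^ k.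
Proof.
have detX m : \det (A ^+ m) = \det A ^+ m.
  by elim: m => [|m IHm]; rewrite ?det1 // !exprS detM IHm.
case: k => m; first exact: detX.
by change (\det (A ^+ m.+1)^-1 = (\det A ^+ m.+1)^-1); rewrite -detX; exact: det_inv.
Qed.

Lemma det_prod (I : Type) n (r : seq I) (F : I -> 'M[R]_n.+1) :
  \det (\prod_(i <- r) F i) = \prod_(i <- r) \det (F i).
Proof. exact: (big_morph _ (@detM _ _) (det1 _ _)). Qed.

End Matrix2.

(* (p - i) q / p = q - i q / p is not an integer, so its floor is
   q - 1 - floor (i q / p), which has the parity of floor (i q / p). *)
Lemma esign_sym p q i : odd `|q| -> coprime p `|q| -> (0 < i < p)%N ->
  esign p q (p - i) = esign p q i.
Proof.
move=> q_odd pq_coprime /andP[i_gt0 i_ltp].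
have p_gt0 : (0 < p)%N := leq_ltn_trans (leq0n i) i_ltp.
have p_neq0 : p%:Z != 0 by rewrite eqz_nat -lt0n.
set k := (i%:Z * q %/ p)%Z; set r := (i%:Z * q %% p)%Z.
have r_neq0 : r != 0.
  apply/negP => /eqP/dvdz_mod0P; rewrite dvdzE abszM absz_nat Gauss_dvdl //.
  by move/(dvdn_leq i_gt0); rewrite leqNgt i_ltp.
have r_ge0 : 0 <= r by exact: modz_ge0.
have r_ltp : r < p%:Z by rewrite ltz_pmod // ltz_nat.
rewrite /esign -/k.
have -> : (p - i)%N%:Z * q = (q - k - 1) * p + (p%:Z - r).
  have iq : i%:Z * q = k * p + r := divz_eq _ _.
  by rewrite -subzn ?(ltnW i_ltp) // mulrBl iq; ring.
rewrite divzMDl // divz_small ?addr0; last by rewrite absz_nat; lia.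
by rewrite -signr_odd -[RHS]signr_odd; congr ((-1) ^+ _); lia.
Qed.

Lemma rev_index_iota m n :
  rev (index_iota m n) = [seq (m + n - i.+1)%N | i <- index_iota m n].
Proof.
apply: (@eq_from_nth _ 0%N); rewrite ?size_rev ?size_map // => i.
rewrite size_iota => i_lt.
by rewrite nth_rev ?size_iota // (nth_map 0%N) ?size_iota // !nth_iota //; lia.
Qed.

Lemma subr_inv_eq0 (F : fieldType) (x : F) : x != 0 ->
  (x - x^-1 == 0) = (x == 1) || (x == -1).
Proof.
move=> x_neq0; have -> : x - x^-1 = (x - 1) * (x + 1) / x by field.
by rewrite !mulf_eq0 invr_eq0 (negbTE x_neq0) orbF subr_eq0 addr_eq0.
Qed.

Section TwoBridgeMatrices.
Variable R : realType.
Variables t u : R[i].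
Hypothesis t_neq0 : t != 0.

Definition Pmat : 'M[R[i]]_2 := \matrix_(i < 2, j < 2)
  (if (i == 0) && (j == 0) then t - t^-1 else if (i == 0) && (j == 1) then 1
   else if (i == 1) && (j == 0) then - u else - (t - t^-1)).

Definition Smat : 'M[R[i]]_2 := \matrix_(i < 2, j < 2)
  (if (i == 0) && (j == 0) then 1 else if (i == 1) && (j == 1) then - u else 0).

Lemma det_Cmat : \det (Cmat t) = 1.
Proof. by rewrite det_mx2 !mxE /= mulfV // mulr0 subr0. Qed.

Lemma det_Dmat : \det (Dmat t u) = 1.
Proof. by rewrite det_mx2 !mxE /= mulfV // mul0r subr0. Qed.

Lemma Cmat_unit : Cmat t \is a GRing.unit.
Proof. by rewrite unitmxE det_Cmat unitr1. Qed.

Lemma Dmat_unit : Dmat t u \is a GRing.unit.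
Proof. by rewrite unitmxE det_Dmat unitr1. Qed.

Lemma Cmat_Pmat : Cmat t * Pmat = Pmat * Dmat t u.
Proof. by apply: eq_mx2; rewrite !mulmx2E !mxE /=; field. Qed.

Lemma Dmat_Pmat : Dmat t u * Pmat = Pmat * Cmat t.
Proof. by apply: eq_mx2; rewrite !mulmx2E !mxE /=; field. Qed.

Lemma Cmat_Smat : Cmat t * Smat = Smat * (Dmat t u)^T.
Proof. by apply: eq_mx2; rewrite !mulmx2E !mxE /=; field. Qed.

Lemma Dmat_Smat : Dmat t u * Smat = Smat * (Cmat t)^T.
Proof. by apply: eq_mx2; rewrite !mulmx2E !mxE /=; field. Qed.

Lemma Pmat_sqr : Pmat * Pmat = ((t - t^-1) ^+ 2 - u)%:M.
Proof. by apply: eq_mx2; rewrite !mulmx2E !mxE /= ?mulr1n ?mulr0n; ring. Qed.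

(* (1, 0)^T is an eigenvector of C for t and (0, 1) a left eigenvector for
   t^-1; intertwining transports both to the powers of C. *)
Lemma Cmat_exprz (k : int) :
  [/\ (Cmat t ^ k) 0 0 = t ^ k, (Cmat t ^ k) 1 0 = 0 & (Cmat t ^ k) 1 1 = (t ^ k)^-1].
Proof.
have t_unit : t \is a GRing.unit by rewrite unitfE.
have scalar_unit (x : R[i]) : x != 0 -> (x%:M : 'M_2) \is a GRing.unit.
  by move=> x_neq0; rewrite unitmxE det_scalar unitfE expf_neq0.
have col0 : Cmat t ^ k * delta_mx 0 0 = delta_mx 0 0 * (t ^ k)%:M.
  rewrite (rmorphXz (@scalar_mx _ 2) k t_unit).
  apply: intertwine_exprz; rewrite ?Cmat_unit ?scalar_unit //.
  by apply: eq_mx2; rewrite !mulmx2E !mxE /=; ring.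
have row1 : ((t ^ k)^-1)%:M * delta_mx 1 1 = delta_mx 1 1 * Cmat t ^ k.
  rewrite invr_expz -exprz_inv (rmorphXz (@scalar_mx _ 2) k _) ?unitrV //.
  apply: intertwine_exprz; rewrite ?Cmat_unit ?scalar_unit ?invr_eq0 //.
  by apply: eq_mx2; rewrite !mulmx2E !mxE /=; ring.
move/matrixP: col0 => col0; move/matrixP: row1 => row1.
have := col0 0 0; have := col0 1 0; have := row1 1 1.
rewrite !mulmx2E !mxE /= !(mulr0n, mulr1n, mulr0, mul0r, mulr1, mul1r, addr0, add0r).
by move=> <- -> ->.
Qed.

Lemma comm_Cmat_scalar (M : 'M[R[i]]_2) x : t - t^-1 != 0 ->
  M * Cmat t = Cmat t * M -> M 0 0 = x -> M 1 1 = x -> M = x%:M.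
Proof.
move=> s_neq0 /matrixP MC M00 M11.
have := MC 0 0; have := MC 0 1; rewrite !mulmx2E !mxE /= M00 M11 => e01 e00.
have M01 : M 0 1 = 0.
  apply/eqP; rewrite -(inj_eq (mulIf s_neq0)) mul0r.
  have -> : M 0 1 * (t - t^-1) = (t * M 0 1 + 1 * x) - (x * 1 + M 0 1 / t) by ring.
  by rewrite e01 subrr.
have M10 : M 1 0 = 0.
  have -> : M 1 0 = (t * x + 1 * M 1 0) - (x * t + M 0 1 * 0) by ring.
  by rewrite -e00 subrr.
by apply: eq_mx2; rewrite !mxE /= ?mulr1n ?mulr0n.
Qed.

Lemma Wstar_Pmat p q : Wstar p q t u * Pmat = Pmat * Wmat p q t u.
Proof.
apply: intertwine_prod => i; case: (odd i); apply: intertwine_exprz;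
  by rewrite ?Cmat_unit ?Dmat_unit ?Cmat_Pmat ?Dmat_Pmat.
Qed.

Lemma det_Wmat p q : \det (Wmat p q t u) = 1.
Proof.
rewrite det_prod big1_seq // => i _.
by case: (odd i); rewrite det_exprz ?det_Cmat ?det_Dmat // exp1rz.
Qed.

Lemma Wmat_rev p q : odd p -> odd `|q| -> coprime p `|q| ->
  \prod_(i <- rev (index_iota 1 p)) (if odd i then Dmat t u else Cmat t) ^ esign p q i
  = Wmat p q t u.
Proof.
move=> p_odd q_odd pq_coprime; rewrite rev_index_iota big_map /Wmat.
apply: eq_big_seq => i; rewrite mem_index_iota => i_range.
rewrite add1n subSS (esign_sym q_odd pq_coprime i_range).
rewrite oddB ?p_odd; last by case/andP: i_range => _ /ltnW.
by case: (odd i).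
Qed.

Lemma Wmat_Smat p q : odd p -> odd `|q| -> coprime p `|q| ->
  Wmat p q t u * Smat = Smat * (Wmat p q t u)^T.
Proof.
move=> p_odd q_odd pq_coprime.
rewrite -{2}(Wmat_rev p_odd q_odd pq_coprime) trmx_prod revK.
apply: intertwine_prod => i; rewrite trmx_exprz.
by case: (odd i); apply: intertwine_exprz;
  rewrite ?unitmx_tr ?Cmat_unit ?Dmat_unit ?Cmat_Smat ?Dmat_Smat.
Qed.

Lemma Wmat10 p q : odd p -> odd `|q| -> coprime p `|q| ->
  Wmat p q t u 1 0 = - u * Wmat p q t u 0 1.
Proof.
move=> p_odd q_odd pq_coprime.
have /matrixP/(_ 0 1) := Wmat_Smat p_odd q_odd pq_coprime.
rewrite !mulmx2E !mxE /= mulr0 add0r mul1r mul0r addr0 => <-.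
exact: mulrC.
Qed.

End TwoBridgeMatrices.

Section KnotRelations.
Variable R : realType.
Variables (t u : R[i]) (N : int) (W Ws : 'M[R[i]]_2).
Hypotheses (t_neq0 : t != 0) (s_neq0 : t - t^-1 != 0) (z_neq0 : (t - t^-1) ^+ 2 - u != 0).
Hypotheses (det_W : \det W = 1) (W10 : W 1 0 = - u * W 0 1).
Hypothesis Ws_Pmat : Ws * Pmat t u = Pmat t u * W.
Local Notation s := (t - t^-1).
Local Notation z := ((t - t^-1) ^+ 2 - u).

Lemma WC_DW_iff : W * Cmat t = Dmat t u * W <-> W 0 0 = s * W 0 1.
Proof.
split=> [/matrixP/(_ 0 1) | a_eq].
  rewrite !mulmx2E !mxE /= => e01.
  have -> : W 0 0 = (W 0 0 * 1 + W 0 1 / t) - W 0 1 / t by ring.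
  by rewrite e01; ring.
by apply: eq_mx2; rewrite !mulmx2E !mxE /= ?a_eq ?W10; field.
Qed.

Lemma PmatW_upper : W 0 0 = s * W 0 1 ->
  let Q := Pmat t u * W in [/\ Q 1 0 = 0, Q 0 0 = z * W 0 1 & W 0 1 * Q 1 1 = -1].
Proof.
move=> a_eq /=; rewrite !mulmx2E !mxE /=.
by split; [rewrite a_eq W10 | rewrite a_eq W10 | rewrite -det_W det_mx2 a_eq W10]; ring.
Qed.

Lemma knot_relations_iff :
  (Cmat t ^ N * Ws * W = 1 /\ W * Cmat t = Dmat t u * W) <->
  (W 0 0 = s * W 0 1 /\ t ^ N * z * W 0 1 ^+ 2 = 1).
Proof.
set b := W 0 1; set Q := Pmat t u * W.
have CQ2 : Cmat t ^ N * Q ^+ 2 = z *: (Cmat t ^ N * Ws * W).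
  rewrite expr2 {1}/Q -Ws_Pmat -!mulrA [Pmat t u * Q]mulrA Pmat_sqr.
  by rewrite -scalemx1 -scalerAl mul1r -!scalerAr.
have [CN00 CN10 CN11] := Cmat_exprz t_neq0 N.
have diagCQ2 : W 0 0 = s * b ->
  (Cmat t ^ N * Q ^+ 2) 0 0 = t ^ N * (z * b) ^+ 2 /\
  (Cmat t ^ N * Q ^+ 2) 1 1 = (t ^ N)^-1 * Q 1 1 ^+ 2.
  move=> /PmatW_upper[Q10 Q00 _].
  have [Q2_00 Q2_10 Q2_11] := mulmx2_upper Q10 Q10.
  have [-> _ ->] := mulmx2_upper CN10 Q2_10.
  by rewrite expr2 Q2_00 Q2_11 CN00 CN11 Q00.
split=> [[rel WC] | [a_eq T_eq]].
  have a_eq := WC_DW_iff.1 WC; split=> //.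
  have := (diagCQ2 a_eq).1; rewrite CQ2 rel scalemx1 mxE /= mulr1n => zE.
  by apply: (mulfI z_neq0); rewrite mulr1 [RHS]zE; ring.
have WC := WC_DW_iff.2 a_eq; split=> //.
have [_ _ bQ11] := PmatW_upper a_eq.
have QC : GRing.comm (Cmat t) Q.
  by rewrite /GRing.comm /Q mulrA Cmat_Pmat // -mulrA -WC mulrA.
have M_scalar : Cmat t ^ N * Q ^+ 2 = z%:M.
  have [M00 M11] := diagCQ2 a_eq.
  apply: (comm_Cmat_scalar s_neq0).
  - exact/esym/(commrM (commrXz _ (commr_refl _)) (commrX _ QC)).
  - by rewrite M00; transitivity (z * (t ^ N * z * b ^+ 2)); [ring | rewrite T_eq mulr1].
  - rewrite M11 (mulr1_eq (_ : t ^ N * (z * b ^+ 2) = 1)); last by rewrite mulrA.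
    by transitivity (z * (b * Q 1 1) ^+ 2); [ring | rewrite bQ11 sqrrN expr1n mulr1].
by apply: (scalerI z_neq0); rewrite -CQ2 M_scalar scalemx1.
Qed.

End KnotRelations.

Theorem mainTheorem5 (R : realType) (p : nat) (q : int) (n : int)
    (t u : R[i]) :
  odd p -> (odd `|q|%N) -> (- (p%:Z) < q) -> (q < p%:Z) ->
  coprime p `|q|%N ->
  t != 0 -> t != 1 -> t != -1 -> (t - t^-1) ^+ 2 != u ->
  let N := n - 2 * sigma p q in
  let W := Wmat p q t u in
  let a := W 0 0 in
  let b := W 0 1 in
  (Cmat t ^ N * Wstar p q t u * W = 1 /\ W * Cmat t = Dmat t u * W)
  <->
  (a = (t - t^-1) * b /\ t ^ N * ((t - t^-1) ^+ 2 - u) * b ^+ 2 = 1).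
Proof.
move=> p_odd q_odd _ _ pq_coprime t_neq0 t_neq1 t_neqN1 tu_neq N W a b.
have s_neq0 : t - t^-1 != 0 by rewrite subr_inv_eq0 // negb_or t_neq1.
have z_neq0 : (t - t^-1) ^+ 2 - u != 0 by rewrite subr_eq0.
exact: (knot_relations_iff N t_neq0 s_neq0 z_neq0 (det_Wmat u t_neq0 p q)
  (Wmat10 u t_neq0 p_odd q_odd pq_coprime) (Wstar_Pmat u t_neq0 p q)).
Qed.
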